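(* Let $(X_1,\dots,X_d,Y)$ follow a structural equation model with causal DAG $G$ in which $Y$ is a sink node and $Y=f^*(X)+\varepsilon$ with $\mathbb{E}[\varepsilon]=0$, $\varepsilon$ independent of $X$, where $f^*$ depends on $X$ only through $X_{\mathrm{pa}(Y)}$. Let $\mathcal{I}\subseteq\{1,\dots,d\}$ satisfy $$\mathrm{pa}(Y)\subseteq\mathcal{I}\cup\mathrm{desc}(\mathcal{I})^C.$$ Then for every covariate-fixing transformation $T_{\mathcal{I}\to z}$, $$\mathbb{E}_X\big[f^*(T_{\mathcal{I}\to z}(X))-f^*(X)\big]=\mathbb{E}_{\widetilde X\sim do(X_{\mathcal{I}}=z_{\mathcal{I}})}\big[f^*(\widetilde X)\big]-\mathbb{E}_X\big[f^*(X)\big].$$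
   Context: $\mathrm{pa}(Y)$ is the set of parents of $Y$ in $G$; $\mathrm{desc}(\mathcal{I})$ is the set of covariates that are descendants in $G$ of at least one variable in $\mathcal{I}$, and $A^C$ denotes complement in $\{1,\dots,d\}$. For $\mathcal{I}$ and $z\in\mathbb{R}^d$, the covariate-fixing transformation is $T_{\mathcal{I}\to z}(x)_j=z_j$ for $j\in\mathcal{I}$ and $T_{\mathcal{I}\to z}(x)_j=x_j$ for $j\notin\mathcal{I}$. $\mathbb{E}_X$ is expectation under the observational (pre-intervention) distribution of $X$; $do(X_{\mathcal{I}}=z_{\mathcal{I}})$ denotes the interventional distribution of the covariates in the SEM obtained by Pearl's do-operation setting the variables in $\mathcal{I}$ to $z_{\mathcal{I}}$ (other variables, including descendants of $\mathcal{I}$, are generated by their structural equations). *)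

From HB Require Import structures.
From mathcomp Require Import all_boot all_order all_algebra.
From mathcomp Require Import all_classical all_reals all_analysis.
Set Implicit Arguments. Unset Strict Implicit. Unset Printing Implicit Defensive.
Import Order.TTheory GRing.Theory Num.Theory.
Local Open Scope classical_set_scope.
Local Open Scope ring_scope.

Definition acyclic (d : nat) (E : rel 'I_d) : Prop :=
  forall i j, E i j -> ~~ connect E j i.

Definition parents (d : nat) (E : rel 'I_d) (j : 'I_d) : {set 'I_d} :=
  [set i | E i j].

Definition desc (d : nat) (E : rel 'I_d) (I : {set 'I_d}) : {set 'I_d} :=
  [set j | [exists i in I, (i != j) && connect E i j]].

Definition fix_cov (R : Type) (d : nat) (I : {set 'I_d}) (z x : 'I_d -> R)
  : 'I_d -> R := fun j => if j \in I then z j else x j.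

Definition depends_only_on (R : Type) (d : nat) (S : {set 'I_d})
  (f : ('I_d -> R) -> R) : Prop :=
  forall x x', (forall i, i \in S -> x i = x' i) -> f x = f x'.

Definition mutually_independent {dT} {T : measurableType dT} {R : realType}
  (P : probability T R) (n : nat) (N : 'I_n -> T -> R) : Prop :=
  forall (J : {set 'I_n}) (B : 'I_n -> set R),
    (forall j, measurable (B j)) ->
    P (\bigcap_(j in [set j | j \in J]) (N j @^-1` B j)) =
    (\prod_(j in J) P (N j @^-1` B j))%E.

Definition indep_of_vector {dT} {T : measurableType dT} {R : realType}
  (P : probability T R) (e : T -> R) (n : nat) (X : 'I_n -> T -> R) : Prop :=
  forall (A : set R) (B : 'I_n -> set R),
    measurable A -> (forall j, measurable (B j)) ->
    P (e @^-1` A `&` \bigcap_(j in setT) (X j @^-1` B j)) =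
    (P (e @^-1` A) * P (\bigcap_(j in setT) (X j @^-1` B j)))%E.

From HB Require Import structures.
From mathcomp Require Import all_boot all_order all_algebra.
From mathcomp Require Import all_classical all_reals all_analysis.
Import Order.TTheory GRing.Theory Num.Theory.
Set Implicit Arguments. Unset Strict Implicit. Unset Printing Implicit Defensive.

(* The intervened SEM uses the same noises, so, realisation by realisation, a
   covariate that is neither intervened on nor a descendant of I satisfies the
   same structural equation as in the observational SEM, with parents of the
   same kind; by well-founded induction along the DAG it takes the same value.
   Since pa(Y) avoids desc(I) \ I, f* sees the same inputs on T_{I->z}(X) and
   on the interventional covariates, and the identity follows by linearity of
   the integral. *)

Definition ancestors (d : nat) (E : rel 'I_d) (j : 'I_d) : {set 'I_d} :=
  [set i | connect E i j].

Section DAG.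

Variables (d : nat) (E : rel 'I_d).
Hypothesis acyclicE : acyclic E.

Lemma edge_neq k j : E k j -> k != j.
Proof. by move=> ekj; apply/eqP=> eq_kj; move: (acyclicE ekj); rewrite eq_kj connect0. Qed.

Lemma card_ancestors_edge k j : E k j -> #|ancestors E k| < #|ancestors E j|.
Proof.
move=> ekj; apply: proper_card; apply/properP; split.
  by apply/fintype.subsetP=> i; rewrite !inE => cik; apply: connect_trans cik (connect1 ekj).
exists j; first by rewrite inE connect0.
by rewrite inE; apply/negP=> cjk; move: (acyclicE ekj); rewrite cjk.
Qed.

Lemma parent_notin_desc (I : {set 'I_d}) k j :
  E k j -> j \notin I -> j \notin desc E I -> (k \notin I) && (k \notin desc E I).
Proof.
move=> ekj jNI jND; apply/andP; split.
  apply: contra jND => kI; rewrite inE; apply/existsP; exists k.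
  by rewrite kI edge_neq // connect1.
apply: contra jND; rewrite !inE => /existsP [i /and3P [iI _ cik]].
have cij : connect E i j := connect_trans cik (connect1 ekj).
apply/existsP; exists i; rewrite iI cij andbT /=.
by apply: contra jNI => /eqP <-.
Qed.

End DAG.

Lemma do_eq_off_desc (A : Type) (d : nat) (E : rel 'I_d) (acyclicE : acyclic E)
  (g : 'I_d -> ('I_d -> A) -> A -> A)
  (g_local : forall j x x' n, (forall i, E i j -> x i = x' i) -> g j x n = g j x' n)
  (I : {set 'I_d}) (z : 'I_d -> A) (noise x xt : 'I_d -> A)
  (x_sem : forall j, x j = g j x (noise j))
  (xt_sem : forall j, xt j = if j \in I then z j else g j xt (noise j)) :
  forall j, j \notin I -> j \notin desc E I -> xt j = x j.
Proof.
move=> j; move: {2}#|ancestors E j| (leqnn #|ancestors E j|) => n.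
elim: n j => [|n IHn] j anc_le jNI jND.
  by move: anc_le; rewrite leqn0 => /eqP/cards0_eq/setP/(_ j); rewrite !inE connect0.
rewrite xt_sem (negbTE jNI) x_sem; apply: g_local => k ekj.
case/andP: (parent_notin_desc acyclicE ekj jNI jND) => kNI kND.
apply: IHn kNI kND; rewrite -ltnS.
exact: leq_trans (card_ancestors_edge acyclicE ekj) anc_le.
Qed.

Local Open Scope classical_set_scope.
Local Open Scope ring_scope.

Theorem theorem3
  (dT : measure_display) (T : measurableType dT) (R : realType)
  (P : probability T R) (d : nat)
  (* causal DAG on the covariates; Y is a sink with parent set paY *)
  (E : rel 'I_d) (hE : acyclic E) (paY : {set 'I_d})
  (* structural equations X_j = g_j(X_pa(j), N_j), noises jointly independent *)
  (g : 'I_d -> ('I_d -> R) -> R -> R)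
  (hg : forall j x x' n, (forall i, E i j -> x i = x' i) -> g j x n = g j x' n)
  (N : 'I_d -> T -> R) (hNm : forall j, measurable_fun setT (N j))
  (hNind : mutually_independent P N)
  (X : 'I_d -> T -> R) (hXm : forall j, measurable_fun setT (X j))
  (hX : forall j w, X j w = g j (fun i => X i w) (N j w))
  (* response Y = f*(X) + eps, E[eps] = 0, eps independent of X *)
  (fstar : ('I_d -> R) -> R) (hf : depends_only_on paY fstar)
  (eps : T -> R) (heps_int : P.-integrable setT (fun w => (eps w)%:E))
  (heps0 : (\int[P]_w (eps w)%:E = 0)%E)
  (heps_ind : indep_of_vector P eps X)
  (Y : T -> R) (hY : forall w, Y w = fstar (fun i => X i w) + eps w)
  (* intervention set *)
  (I : {set 'I_d}) (hI : paY \subset I :|: ~: desc E I)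
  (z : 'I_d -> R)
  (* interventional covariates under do(X_I = z_I), generated by the SEM
     with the same noises *)
  (Xt : 'I_d -> T -> R) (hXtm : forall j, measurable_fun setT (Xt j))
  (hXt : forall j w, Xt j w =
           if j \in I then z j else g j (fun i => Xt i w) (N j w))
  (* the expectations appearing in the statement exist *)
  (hfX : P.-integrable setT (fun w => (fstar (fun i => X i w))%:E))
  (hfXt : P.-integrable setT (fun w => (fstar (fun i => Xt i w))%:E)) :
  (\int[P]_w (fstar (fix_cov I z (fun i => X i w)) - fstar (fun i => X i w))%:E
   = \int[P]_w (fstar (fun i => Xt i w))%:E
     - \int[P]_w (fstar (fun i => X i w))%:E)%E.
Proof.
have fix_cov_do w : fstar (fix_cov I z (fun i => X i w)) = fstar (fun i => Xt i w).
  apply: hf => i /(fintype.subsetP hI); rewrite /fix_cov finset.in_setU finset.in_setC.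
  case: ifP => [iI _|iNI /= iND]; first by rewrite hXt iI.
  by symmetry; apply: (do_eq_off_desc hE hg (hX^~ w) (hXt^~ w)); rewrite ?iNI.
under eq_integral do rewrite fix_cov_do EFinB.
exact: integralB_EFin.
Qed.
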